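(* Let $(X,Y,R)$ be a random triple with $X\in\mathbb{R}^d$, $Y\in\{0,1\}$, $R\in\{0,1\}$, $0<P(R=1)<1$, with all conditional probabilities $P(R=r\mid X,Y)$, $P(Y=y\mid X,R=r)$ in $(0,1)$. Let $T:\mathbb{R}^d\to\mathbb{R}^k$ be measurable and for $\theta=(\alpha_0,\alpha_1,\beta_0,\beta_1)\in\mathbb{R}\times\mathbb{R}\times\mathbb{R}^k\times\mathbb{R}^k$ set $\omega(x,y;\theta)=\exp(\alpha_y+\beta_y^\top T(x))$, $$\eta_r(x,y;\theta)=\frac{P(R=1)}{P(R=1)+\omega(x,y;\theta)P(R=0)},\qquad \gamma(1\mid x;\theta)=(\alpha_1-\alpha_0)+(\beta_1-\beta_0)^\top T(x).$$ Let $\{\eta_1(\cdot;\xi):\xi\in\Xi\}$ be a family of measurable functions $\mathbb{R}^d\to(0,1)$, and set $$m_0(x;\theta,\xi)=\frac{e^{\gamma(1\mid x;\theta)}\eta_1(x;\xi)}{e^{\gamma(1\mid x;\theta)}\eta_1(x;\xi)+1-\eta_1(x;\xi)}.$$ Let $\tau:\mathbb{R}^d\times\{0,1\}\to\mathbb{R}$ and $m_{0,\tau}(x;\theta,\xi)=\tau(x,0)+\{\tau(x,1)-\tau(x,0)\}m_0(x;\theta,\xi)$. Fix $\theta^\star$ and $\xi^\star\in\Xi$, and assume all expectations below are finite. Define $$\text{a-bias}(\widehat\mu_{0,\mathrm{IW}})=\mathbb{E}\Big[\Big\{\tfrac{R}{P(R=1)}\omega(X,Y;\theta^\star)-\tfrac{1-R}{P(R=0)}\Big\}\tau(X,Y)\Big],\quad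 \text{a-bias}(\widehat\mu_{\mathrm{IW}})=\mathbb{E}\Big[\Big\{\tfrac{R}{\eta_r(X,Y;\theta^\star)}-1\Big\}\tau(X,Y)\Big],$$ $$\text{a-bias}(\widehat\mu_{0,\mathrm{DR}})=\mathbb{E}\Big[\Big\{\tfrac{R}{P(R=1)}\omega(X,Y;\theta^\star)-\tfrac{1-R}{P(R=0)}\Big\}\{\tau(X,Y)-m_{0,\tau}(X;\theta^\star,\xi^\star)\}\Big],$$ $$\text{a-bias}(\widehat\mu_{\mathrm{DR}})=\mathbb{E}\Big[\Big\{\tfrac{R}{\eta_r(X,Y;\theta^\star)}-1\Big\}\{\tau(X,Y)-m_{0,\tau}(X;\theta^\star,\xi^\star)\}\Big].$$ Then: (i) If $\mathbb{E}[R\mid X,Y]=\eta_r(X,Y;\theta^\star)$, then $\text{a-bias}(\widehat\mu_{0,\mathrm{IW}})=\text{a-bias}(\widehat\mu_{\mathrm{IW}})=\text{a-bias}(\widehat\mu_{0,\mathrm{DR}})=\text{a-bias}(\widehat\mu_{\mathrm{DR}})=0$. (ii) If $\gamma(1\mid x)=\gamma(1\mid x;\theta^\star)$ for all $x$ and $\mathbb{E}[Y\mid X,R=0]=m_0(X;\theta^\star,\xi^\star)$, then $\text{a-bias}(\widehat\mu_{0,\mathrm{DR}})=\text{a-bias}(\widehat\mu_{\mathrm{DR}})=0$. Here $\gamma(y\mid x)=\log\Big\{\dfrac{P(R=0\mid Y=y,X=x)\,P(R=1\mid Y=0,X=x)}{P(R=1\mid Y=y,X=x)\,P(R=0\mid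 Y=0,X=x)}\Big\}$ is the true log odds ratio.
   Context: $R=1$ indicates that $Y$ is observed, $R=0$ that it is missing. The quantities ''a-bias'' are the asymptotic biases of importance-weighted (IW) and doubly robust (DR) estimators of $\mathbb{E}[\tau(X,Y)\mid R=0]$ and $\mathbb{E}[\tau(X,Y)]$ whose tilt-parameter estimates converge to $\theta^\star$ and whose outcome-model estimates $\eta_1(\cdot;\widehat\xi)$ of $P(Y=1\mid X,R=1)$ converge to parameter $\xi^\star$; for the purposes of this statement they are defined by the displayed expressions. *)

From HB Require Import structures.
From mathcomp Require Import all_boot all_order all_algebra.
From mathcomp Require Import all_classical all_reals all_analysis.
Set Implicit Arguments. Unset Strict Implicit. Unset Printing Implicit Defensive.
Import Order.TTheory GRing.Theory Num.Theory.
Local Open Scope classical_set_scope.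
Local Open Scope ring_scope.

(** Covariates live in R^d, represented as [d.-tuple R] with the product
    (= Borel) sigma-algebra provided by MathComp-Analysis. *)

Definition dotk {R : realType} {k : nat} (b t : k.-tuple R) : R :=
  \sum_(i < k) tnth b i * tnth t i.

Record param (R : realType) (k : nat) := Param {
  alpha0 : R; alpha1 : R; beta0 : k.-tuple R; beta1 : k.-tuple R }.

Section Model.
Context {R : realType} {d k : nat} (T : d.-tuple R -> k.-tuple R).

Definition omega (th : param R k) (x : d.-tuple R) (y : bool) : R :=
  expR ((if y then alpha1 th else alpha0 th) +
        dotk (if y then beta1 th else beta0 th) (T x)).

Definition eta_r (pr1 pr0 : R) (th : param R k) (x : d.-tuple R) (y : bool) : R :=
  pr1 / (pr1 + omega th x y * pr0).

Definition gamma1 (th : param R k) (x : d.-tuple R) : R :=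
  (alpha1 th - alpha0 th) + (dotk (beta1 th) (T x) - dotk (beta0 th) (T x)).

(** m_0(x;theta,xi), given the value e = eta_1(x;xi) *)
Definition m0 (th : param R k) (e : d.-tuple R -> R) (x : d.-tuple R) : R :=
  expR (gamma1 th x) * e x / (expR (gamma1 th x) * e x + 1 - e x).

Definition m0tau (tau : d.-tuple R -> bool -> R) (th : param R k)
  (e : d.-tuple R -> R) (x : d.-tuple R) : R :=
  tau x false + (tau x true - tau x false) * m0 th e x.
End Model.

(** True log odds ratio gamma(1|x) computed from (a version of)
    pR x y = P(R=1 | Y=y, X=x):
    log{ P(R=0|Y=1,X=x) P(R=1|Y=0,X=x) / (P(R=1|Y=1,X=x) P(R=0|Y=0,X=x)) }. *)
Definition gamma_true {R : realType} {V : Type} (pR : V -> bool -> R) (x : V) : R :=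
  ln (((1 - pR x true) * pR x false) / (pR x true * (1 - pR x false))).

(** [g] is a version of the conditional expectation E[Z | U], expressed
    by the defining property of conditional expectation: g is measurable
    and E[Z 1{U in B}] = E[g(U) 1{U in B}] for every measurable B. *)
Definition cexp_version {R : realType} {dO : measure_display} {O : measurableType dO}
  {dV : measure_display} {V : measurableType dV}
  (P : probability O R) (Z : O -> R) (U : O -> V) (g : V -> R) : Prop :=
  measurable_fun setT g /\
  forall B : set V, measurable B ->
    (\int[P]_(w in U @^-1` B) (Z w)%:E = \int[P]_(w in U @^-1` B) (g (U w))%:E)%E.

From HB Require Import structures.
From mathcomp Require Import all_boot all_order all_algebra.
From mathcomp Require Import all_classical all_reals all_analysis.
From mathcomp Require Import measurable_realfun ring.
Set Implicit Arguments.
Unset Strict Implicit.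
Unset Printing Implicit Defensive.
Import Order.TTheory GRing.Theory Num.Theory.
Local Open Scope classical_set_scope.
Local Open Scope ring_scope.

(* Both biases are expectations of a weight, a function of (R, X, Y), times a
   function of (X, Y). Conditioning on (X, Y) replaces R by a version p(X, Y)
   of P(R = 1 | X, Y): the image of P restricted to {R = 1} has density p with
   respect to the image of P, so the Radon-Nikodym change of variables applies.
   Moreover the IW weight is P(R = 0) times the IW0 weight, so it is enough to
   treat the latter.
   (i) If p is eta_r at theta*, the conditional weight
       p omega / P(R = 1) - (1 - p) / P(R = 0) vanishes identically.
   (ii) If the odds ratio is correctly specified, omega(x, y) p / (1 - p) does
       not depend on y, so the conditional DR integrand is (1 - p) times
       D(X) (Y - m0(X)) for some D. Conditioning back on {R = 0}, this
       integrates to zero because m0(X) is a version of P(Y = 1 | X, R = 0). *)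

Section density.
Local Open Scope ereal_scope.
Context d (T : measurableType d) (R : realType).
Variables (nu mu : {finite_measure set T -> \bar R}) (g : T -> R).
Hypotheses (mg : measurable_fun setT g)
  (nuE : forall A, measurable A -> nu A = \int[mu]_(x in A) (g x)%:E).

Let mgE : measurable_fun setT (fun x => (g x)%:E).
Proof. exact/measurable_EFinP. Qed.

Lemma density_dominates : nu `<< mu.
Proof.
apply/null_content_dominatesP => A mA muA0; rewrite nuE //.
by apply: null_set_integral => //; exact: measurable_funTS.
Qed.

Lemma ge0_integral_density (f : T -> \bar R) (E : set T) :
  (forall x, 0 <= f x) -> measurable E -> measurable_fun E f ->
  \int[nu]_(x in E) f x = \int[mu]_(x in E) (f x * (g x)%:E).
Proof.
move=> f0 mE mf.
have numu := density_dominates.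
rewrite -(Radon_Nikodym_SigmaFinite.change_of_variables numu f0 mE mf).
apply: ae_eq_integral => //.
- apply: emeasurable_funM => //; apply: measurable_funTS.
  exact: measurable_int (Radon_Nikodym_SigmaFinite.f_integrable numu).
- by apply: emeasurable_funM => //; exact: measurable_funTS.
(* The Radon-Nikodym derivative of [nu] with respect to [mu] is [g] mu-a.e. *)
apply: ae_eqe_mul2l; apply: (integral_ae_eq mE).
- exact: integrableS (Radon_Nikodym_SigmaFinite.f_integrable numu).
- exact: measurable_funTS.
- by move=> A AE mA; rewrite -Radon_Nikodym_SigmaFinite.f_integral // nuE.
Qed.

End density.

Section restriction.
Local Open Scope ereal_scope.
Context d (T : measurableType d) (R : realType).
Variables (mu : {finite_measure set T -> \bar R}) (S : set T) (mS : measurable S).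

Let muS_lty : mu S < +oo. Proof. by rewrite ltey_eq fin_num_measure. Qed.

Lemma ge0_integral_mfrestr (f : T -> \bar R) (E : set T) :
  (forall x, 0 <= f x) -> measurable E -> measurable_fun E f ->
  \int[mfrestr mS muS_lty]_(x in E) f x = \int[mu]_(x in E `&` S) f x.
Proof.
move=> f0 mE mf.
rewrite (@ge0_integral_density _ _ _ (mfrestr mS muS_lty) mu (\1_S)) //.
- rewrite integral_mkcondr; apply: eq_integral => x _.
  by rewrite epatch_indic.
- by move=> A mA; rewrite integral_indic // setIC.
Qed.

End restriction.

Section pushforward_restriction.
Local Open Scope ereal_scope.
Context d dV (O : measurableType d) (V : measurableType dV) (R : realType).
Variables (mu : {finite_measure set O -> \bar R}) (U : {mfun O >-> V}).
Variables (S : set O) (mS : measurable S).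

Definition pushforward_restr : set V -> \bar R := pushforward (mrestr mu mS) U.

Let pushforward_restr0 : pushforward_restr set0 = 0.
Proof. exact: measure0. Qed.

Let pushforward_restr_ge0 A : 0 <= pushforward_restr A.
Proof. exact: measure_ge0. Qed.

Let pushforward_restr_sigma_additive : semi_sigma_additive pushforward_restr.
Proof. exact: measure_semi_sigma_additive. Qed.

HB.instance Definition _ := isMeasure.Build _ _ _ pushforward_restr
  pushforward_restr0 pushforward_restr_ge0 pushforward_restr_sigma_additive.

Let pushforward_restr_fin : fin_num_fun pushforward_restr.
Proof.
move=> B mB; rewrite /pushforward_restr /pushforward /mrestr fin_num_measure //.
by apply: measurableI => //; exact: measurable_funPTI.
Qed.

HB.instance Definition _ := Measure_isFinite.Build _ _ _ pushforward_restr
  pushforward_restr_fin.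

Lemma ge0_integral_pushforward_restr (f : V -> \bar R) (B : set V) :
  (forall y, 0 <= f y) -> measurable B -> measurable_fun setT f ->
  \int[pushforward_restr]_(y in B) f y = \int[mu]_(w in U @^-1` B `&` S) f (U w).
Proof.
move=> f0 mB mf.
have mUB := measurable_funPTI U mB.
rewrite (ge0_integral_pushforward (measurable_funPT U) (mrestr mu mS)) //.
- rewrite -ge0_integral_mfrestr //.
  by apply: measurable_funTS; exact: measurableT_comp.
- exact: measurable_funTS.
Qed.

End pushforward_restriction.

Section conditional_probability.
Local Open Scope ereal_scope.
Context d dV (O : measurableType d) (V : measurableType dV) (R : realType).
Variables (P : {finite_measure set O -> \bar R}) (U : O -> V).
Hypothesis mU : measurable_fun setT U.

(* [g \o U] is a version of the conditional probability of [S1] given [U]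
   under the trace of [P] on [S2]. *)
Definition cprob_version (S1 S2 : set O) (g : V -> R) :=
  forall B, measurable B ->
    P (U @^-1` B `&` S1) = \int[P]_(w in U @^-1` B `&` S2) (g (U w))%:E.

Let mfunU : {mfun O >-> V} := HB.pack U (isMeasurableFun.Build _ _ _ _ _ mU).

Variables (S1 S2 : set O) (g : V -> R).
Hypotheses (mS1 : measurable S1) (mS2 : measurable S2).
Hypotheses (g_ge0 : forall y, (0 <= g y)%R) (mg : measurable_fun setT g).
Hypothesis S1g : cprob_version S1 S2 g.

Lemma ge0_integral_cprob (f : V -> \bar R) :
  (forall y, 0 <= f y) -> measurable_fun setT f ->
  \int[P]_(w in S1) f (U w) = \int[P]_(w in S2) (f (U w) * (g (U w))%:E).
Proof.
move=> f0 mf.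
have nuE B : measurable B -> pushforward_restr P mfunU mS1 B =
    \int[pushforward_restr P mfunU mS2]_(y in B) (g y)%:E.
  move=> mB; rewrite ge0_integral_pushforward_restr //; last first.
    exact/measurable_EFinP.
  exact: S1g.
have := ge0_integral_density mg nuE f0 measurableT mf.
rewrite !ge0_integral_pushforward_restr //.
- by rewrite /= preimage_setT !setTI.
- by move=> y; rewrite mule_ge0 // lee_fin.
- by apply: emeasurable_funM => //; exact/measurable_EFinP.
Qed.

Lemma integrable_cprob (f : V -> R) : measurable_fun setT f ->
  P.-integrable S1 (fun w => (f (U w))%:E) <->
  P.-integrable S2 (fun w => (f (U w) * g (U w))%:E).
Proof.
move=> mf; have mfU := measurableT_comp mf mU.
have normE : \int[P]_(w in S1) `|(f (U w))%:E| =
    \int[P]_(w in S2) `|(f (U w) * g (U w))%:E|.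
  rewrite (ge0_integral_cprob (f := fun y => `|(f y)%:E|)) //.
    by apply: eq_integral => w _; rewrite !abse_EFin normrM (ger0_norm (g_ge0 _)).
  exact/measurable_EFinP/measurableT_comp.
split => /integrableP[_ fin]; apply/integrableP; rewrite -?normE; split => //.
- apply/measurable_EFinP/measurable_funTS/measurable_funM => //.
  exact: measurableT_comp.
- exact/measurable_EFinP/measurable_funTS.
- by rewrite normE.
Qed.

Lemma integral_cprob (f : V -> R) : measurable_fun setT f ->
  \int[P]_(w in S1) (f (U w))%:E = \int[P]_(w in S2) (f (U w) * g (U w))%:E.
Proof.
move=> mf; have mfE : measurable_fun setT (EFin \o f) by exact/measurable_EFinP.
rewrite integralE [RHS]integralE; congr (_ - _).
- transitivity (\int[P]_(w in S1) (EFin \o f)^\+ (U w)).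
    by apply: eq_integral => w _; rewrite !funeposE.
  rewrite (ge0_integral_cprob (f := (EFin \o f)^\+)) //; last first.
    exact: measurable_funepos.
  by apply: eq_integral => w _; rewrite !funeposE /= maxe_pMl ?lee_fin // mul0e.
- transitivity (\int[P]_(w in S1) (EFin \o f)^\- (U w)).
    by apply: eq_integral => w _; rewrite !funenegE.
  rewrite (ge0_integral_cprob (f := (EFin \o f)^\-)) //; last first.
    exact: measurable_funeneg.
  apply: eq_integral => w _.
  by rewrite !funenegE /= maxe_pMl ?lee_fin // mul0e -EFinM mulNr.
Qed.

End conditional_probability.

Section bool_sets.
Context d (O : measurableType d) (b : O -> bool).
Hypothesis mb : measurable_fun setT b.

Lemma measurable_setb : measurable [set w | b w].
Proof. by rewrite -[X in measurable X]setTI; apply: (mb measurableT). Qed.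

Lemma measurable_setNb : measurable [set w | ~~ b w].
Proof.
rewrite -[X in measurable X]setTI (_ : [set w | ~~ b w] = b @^-1` [set false]).
  by apply: (mb measurableT).
by apply/seteqP; split => w /=; case: (b w).
Qed.

End bool_sets.

Section cprob_bool.
Local Open Scope ereal_scope.
Context d dV (O : measurableType d) (V : measurableType dV) (R : realType).
Variables (P : {finite_measure set O -> \bar R}) (U : O -> V).
Hypothesis mU : measurable_fun setT U.
Variables (S : set O) (b : O -> bool).
Hypotheses (mS : measurable S) (mb : measurable_fun setT b).

Let mfunU : {mfun O >-> V} := HB.pack U (isMeasurableFun.Build _ _ _ _ _ mU).

Let mSb : measurable (S `&` [set w | b w]).
Proof. exact/measurableI/measurable_setb. Qed.

Let mSnb : measurable (S `&` [set w | ~~ b w]).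
Proof. exact/measurableI/measurable_setNb. Qed.

Lemma cprob_version_indicator (g : V -> R) :
  (forall B, measurable B ->
     \int[P]_(w in U @^-1` B `&` S) (b w)%:R%:E =
     \int[P]_(w in U @^-1` B `&` S) (g (U w))%:E) ->
  cprob_version P U (S `&` [set w | b w]) S g.
Proof.
move=> bg B mB; rewrite -bg //.
have mUBS : measurable (U @^-1` B `&` S).
  exact: measurableI (measurable_funPTI mfunU mB) mS.
rewrite setIA setIC -integral_indic //; last exact: measurable_setb.
apply: eq_integral => w _; rewrite indicE.
by case bw : (b w); [rewrite mem_set | rewrite memNset //= bw].
Qed.

Lemma cprob_versionC (g : V -> R) : measurable_fun setT g ->
  (forall y, (0 <= g y <= 1)%R) ->
  cprob_version P U (S `&` [set w | b w]) S g ->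
  cprob_version P U (S `&` [set w | ~~ b w]) S (fun y => 1 - g y)%R.
Proof.
move=> mg g01 Sbg B mB; set A := U @^-1` B.
have mA : measurable A := measurable_funPTI mfunU mB.
have mgU : measurable_fun setT (g \o U) := measurableT_comp mg mU.
have mAb : measurable (A `&` (S `&` [set w | b w])) by exact: measurableI.
have mAnb : measurable (A `&` (S `&` [set w | ~~ b w])) by exact: measurableI.
have PAS : P (A `&` S) = P (A `&` (S `&` [set w | b w])) +
                         P (A `&` (S `&` [set w | ~~ b w])).
  rewrite -measureU //.
  - congr (P _); apply/seteqP; split => w /=.
      by move=> [Aw Sw]; case: (boolP (b w)); [left | right].
    by case=> -[Aw [Sw _]].
  - by apply/seteqP; split => x //= -[[_ [_ ->]]] [_ []].
have PAS_int : P (A `&` S) = \int[P]_(w in A `&` S) (g (U w))%:E +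
                             \int[P]_(w in A `&` S) (1 - g (U w))%:E.
  rewrite -ge0_integralD //; do ?exact: measurableI.
  - under eq_integral do rewrite -EFinD subrKC.
    by rewrite integral_cst ?mul1e //; exact: measurableI.
  - by move=> w _; rewrite lee_fin; case/andP: (g01 (U w)).
  - exact/measurable_EFinP/measurable_funTS.
  - by move=> w _; rewrite lee_fin subr_ge0; case/andP: (g01 (U w)).
  - exact/measurable_EFinP/measurable_funTS/measurable_funB.
set Pb := P (A `&` (S `&` [set w | b w])).
have Pb_fin : Pb \is a fin_num by exact: fin_num_measure.
move: PAS; rewrite PAS_int -Sbg // -/Pb => /(congr1 (fun x => x - Pb)).
by rewrite addeC (addeC Pb) (addeK _ Pb_fin) (addeK _ Pb_fin).
Qed.

Section cprob_split.
Variables (p : V -> R) (H : O -> R) (G1 G0 : V -> R).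
Hypotheses (mp : measurable_fun setT p) (p01 : forall y, (0 <= p y <= 1)%R).
Hypothesis Sbp : cprob_version P U (S `&` [set w | b w]) S p.
Hypotheses (mG1 : measurable_fun setT G1) (mG0 : measurable_fun setT G0).
Hypothesis iH : P.-integrable S (fun w => (H w)%:E).
Hypothesis H1 : forall w, S w -> b w -> H w = G1 (U w).
Hypothesis H0 : forall w, S w -> ~~ b w -> H w = G0 (U w).

Let Sb := S `&` [set w | b w].
Let Snb := S `&` [set w | ~~ b w].
Let p_ge0 y : (0 <= p y)%R. Proof. by case/andP: (p01 y). Qed.
Let Snbp : cprob_version P U Snb S (fun y => 1 - p y)%R.
Proof. exact: cprob_versionC. Qed.
Let mq : measurable_fun setT (fun y => 1 - p y)%R.
Proof. exact: measurable_funB. Qed.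
Let q_ge0 y : (0 <= 1 - p y)%R. Proof. by rewrite subr_ge0; case/andP: (p01 y). Qed.

Let iG1 : P.-integrable S (fun w => (G1 (U w) * p (U w))%:E).
Proof.
apply/(integrable_cprob mU mSb mS p_ge0 mp Sbp mG1).
apply: (eq_integrable mSb (fun w => (H w)%:E)).
  by move=> w /[!inE] -[Sw bw]; rewrite H1.
by apply: integrableS iH => // w [].
Qed.

Let iG0 : P.-integrable S (fun w => (G0 (U w) * (1 - p (U w)))%:E).
Proof.
apply/(integrable_cprob mU mSnb mS q_ge0 mq Snbp mG0).
apply: (eq_integrable mSnb (fun w => (H w)%:E)).
  by move=> w /[!inE] -[Sw bw]; rewrite H0.
by apply: integrableS iH => // w [].
Qed.

Let mixE w : (p (U w) * G1 (U w) + (1 - p (U w)) * G0 (U w))%:E =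
  (G1 (U w) * p (U w))%:E + (G0 (U w) * (1 - p (U w)))%:E.
Proof. by rewrite -EFinD mulrC [X in (_ + X)%R]mulrC. Qed.

Lemma integrable_cprob_split :
  P.-integrable S (fun w => (p (U w) * G1 (U w) + (1 - p (U w)) * G0 (U w))%:E).
Proof.
by apply: eq_integrable (integrableD mS iG1 iG0) => // w _; rewrite mixE.
Qed.

Lemma integral_cprob_split :
  \int[P]_(w in S) (H w)%:E =
  \int[P]_(w in S) (p (U w) * G1 (U w) + (1 - p (U w)) * G0 (U w))%:E.
Proof.
have SE : S = Sb `|` Snb.
  by apply/seteqP; split => w /=; [case: (boolP (b w)) => ? ?; [left|right] | case=> -[]].
under [RHS]eq_integral do rewrite mixE.
rewrite integralD //.
rewrite -(integral_cprob mU mSb mS p_ge0 mp Sbp mG1).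
rewrite -(integral_cprob mU mSnb mS q_ge0 mq Snbp mG0).
rewrite {1}SE integral_setU //; last 2 first.
- by rewrite -SE; case/integrableP: iH.
- by apply/disj_setPS => w [[_ bw] [_ /negP]].
congr (_ + _); apply: eq_integral => w /[!inE] -[Sw bw].
- by rewrite H1.
- by rewrite H0.
Qed.

End cprob_split.

End cprob_bool.

Section measurable_inv.
Import numFieldNormedType.Exports.
Context (R : realType).

Lemma measurable_inv : measurable_fun setT (@GRing.inv R).
Proof.
have oD : open (~` [set x : R | x = 0]) by rewrite openC; exact: closed_eq.
have mD : measurable_fun (~` [set x : R | x = 0]) (@GRing.inv R).
  apply: open_continuous_measurable_fun => //.
  by move=> x /[!inE] /eqP x0; exact: inv_continuous.
rewrite (_ : GRing.inv = fun x : R => if x == 0 then 0 else x^-1); last first.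
  by apply/funext => x; case: eqP => // ->; rewrite invr0.
apply: measurable_fun_if => //.
- by apply: measurable_fun_eqr; [exact: measurable_id | exact: measurable_cst].
- rewrite setTI; apply: measurable_funS mD => //; first exact: open_measurable.
  by move=> x /= /eqP.
Qed.

Lemma measurable_funV d (T : measurableType d) (D : set T) (f : T -> R) :
  measurable_fun D f -> measurable_fun D (fun x => (f x)^-1).
Proof. exact: measurable_comp measurable_inv. Qed.

End measurable_inv.

Lemma measurable_fun_bool_pair d d' (T : measurableType d) (T' : measurableType d')
    (f : T * bool -> T') :
  measurable_fun setT (fun x => f (x, true)) ->
  measurable_fun setT (fun x => f (x, false)) -> measurable_fun setT f.
Proof.
move=> m1 m0; rewrite (_ : f = fun z => if z.2 then f (z.1, true) else f (z.1, false)).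
  exact: measurable_fun_if_pair m1 m0.
by apply/funext => -[x []].
Qed.

Section model_measurability.
Context {R : realType} {d k : nat} (T : d.-tuple R -> k.-tuple R).
Hypothesis mT : measurable_fun setT T.

Lemma measurable_dotk (b : k.-tuple R) : measurable_fun setT (fun x => dotk b (T x)).
Proof.
apply: measurable_sum => i; apply: measurable_funM; first exact: measurable_cst.
exact: measurableT_comp (measurable_tnth i) mT.
Qed.

Lemma measurable_omega th :
  measurable_fun setT (fun z : d.-tuple R * bool => omega T th z.1 z.2).
Proof.
apply: measurable_fun_bool_pair => /=; apply: measurableT_comp => //.
  by apply: measurable_funD => //; exact: measurable_dotk.
by apply: measurable_funD => //; exact: measurable_dotk.
Qed.

Lemma measurable_m0 th (e : d.-tuple R -> R) : measurable_fun setT e ->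
  measurable_fun setT (m0 T th e).
Proof.
move=> me.
have mg : measurable_fun setT (fun x => expR (gamma1 T th x)).
  apply: measurableT_comp => //; apply: measurable_funD => //.
  by apply: measurable_funB; exact: measurable_dotk.
apply: measurable_funM; first exact: measurable_funM.
apply: measurable_funV; apply: measurable_funB => //.
by apply: measurable_funD => //; exact: measurable_funM.
Qed.

Lemma measurable_residual (tau : d.-tuple R -> bool -> R) th (e : d.-tuple R -> R) :
  measurable_fun setT (fun z : d.-tuple R * bool => tau z.1 z.2) ->
  measurable_fun setT e ->
  measurable_fun setT (fun z : d.-tuple R * bool => tau z.1 z.2 - m0tau T tau th e z.1).
Proof.
move=> mtau me; have mtaub b := measurable_fun_pair1 b mtau.
apply: measurable_funB => //; apply: measurableT_comp measurable_fst.
apply: measurable_funD; first exact: mtaub.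
apply: measurable_funM; first by apply: measurable_funB; exact: mtaub.
exact: measurable_m0.
Qed.

End model_measurability.

Section model_algebra.
Context {R : realType} {d k : nat} (T : d.-tuple R -> k.-tuple R).

Lemma omega_gt0 th x y : 0 < omega T th x y.
Proof. exact: expR_gt0. Qed.

Lemma m0_ge0_le1 th (e : d.-tuple R -> R) x : 0 < e x < 1 -> 0 <= m0 T th e x <= 1.
Proof.
case/andP=> e0 e1; rewrite /m0; set E := expR _.
have E0 : 0 < E by exact: expR_gt0.
have den0 : 0 < E * e x + 1 - e x by rewrite -addrA addr_gt0 ?mulr_gt0 // subr_gt0.
apply/andP; split; first by rewrite divr_ge0 // ltW // mulr_gt0.
by rewrite ler_pdivrMr // mul1r -addrA lerDl subr_ge0 ltW.
Qed.

Lemma m0tau_residual (tau : d.-tuple R -> bool -> R) th e x (y : bool) :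
  tau x y - m0tau T tau th e x = (tau x true - tau x false) * (y%:R - m0 T th e x).
Proof. by rewrite /m0tau; case: y => /=; ring. Qed.

Lemma odds_omega (pR : d.-tuple R -> bool -> R) th x (y : bool) :
  (forall y, 0 < pR x y < 1) -> gamma_true pR x = gamma1 T th x ->
  omega T th x y * pR x y / (1 - pR x y) =
  omega T th x false * pR x false / (1 - pR x false).
Proof.
move=> pR01 odds; case: y => //.
have /andP[p1_gt0 p1_lt1] := pR01 true; have /andP[p0_gt0 p0_lt1] := pR01 false.
have ratio_gt0 : 0 < (1 - pR x true) * pR x false / (pR x true * (1 - pR x false)).
  by rewrite divr_gt0 // mulr_gt0 // subr_gt0.
have : omega T th x true = omega T th x false *
    ((1 - pR x true) * pR x false / (pR x true * (1 - pR x false))).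
  rewrite -[X in _ * X]lnK ?posrE // -[ln _]/(gamma_true pR x) odds /omega -expRD.
  by congr expR; rewrite /gamma1 /=; ring.
move=> ->; field.
by rewrite !gt_eqF ?subr_gt0.
Qed.

End model_algebra.

Section bias.
Context (R : realType) (dO : measure_display) (Omega : measurableType dO).
Variables (P : probability Omega R) (d k : nat) (X : Omega -> d.-tuple R).
Variables (Y Rv : Omega -> bool) (T : d.-tuple R -> k.-tuple R) (th : param R k).
Hypotheses (mX : measurable_fun setT X) (mY : measurable_fun setT Y).
Hypotheses (mRv : measurable_fun setT Rv) (mT : measurable_fun setT T).

Local Notation pr1 := (fine (P [set w | Rv w])).
Local Notation pr0 := (fine (P [set w | ~~ Rv w])).
Local Notation XY := (fun w => (X w, Y w)).
Local Notation iw0 w :=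
  ((Rv w)%:R / pr1 * omega T th (X w) (Y w) - (1 - (Rv w)%:R) / pr0).
Local Notation iw w := ((Rv w)%:R / eta_r T pr1 pr0 th (X w) (Y w) - 1).

Hypothesis pr1_01 : 0 < pr1 < 1.

Let pr1_gt0 : 0 < pr1. Proof. by case/andP: pr1_01. Qed.

Let pr0_gt0 : 0 < pr0.
Proof.
have -> : [set w | ~~ Rv w] = ~` [set w | Rv w].
  by apply/seteqP; split => w /=; case: (Rv w).
have mR1 := measurable_setb mRv.
rewrite probability_setC // fineB ?fin_num_measure //.
by rewrite subr_gt0; case/andP: pr1_01.
Qed.

Let mXY : measurable_fun setT XY. Proof. exact: measurable_fun_pair. Qed.

Lemma iw_weightE w : iw w = pr0 * iw0 w.
Proof.
have := omega_gt0 T th (X w) (Y w); set om := omega _ _ _ _ => om_gt0.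
have den_neq0 : pr1 + om * pr0 != 0 by rewrite gt_eqF // addr_gt0 // mulr_gt0.
by rewrite /eta_r -/om; case: (Rv w) => /=; field; rewrite ?den_neq0 ?gt_eqF.
Qed.

Lemma integral_iw (F : d.-tuple R * bool -> R) :
  P.-integrable setT (fun w => (iw0 w * F (XY w))%:E) ->
  (\int[P]_w (iw w * F (XY w))%:E = pr0%:E * \int[P]_w (iw0 w * F (XY w))%:E)%E.
Proof.
move=> iF; rewrite -integralZl //; apply: eq_integral => w _.
by rewrite iw_weightE -EFinM mulrA.
Qed.

Section iw0_split.
Variables (p F : d.-tuple R * bool -> R).
Hypotheses (mp : measurable_fun setT p) (p01 : forall z, 0 <= p z <= 1).
Hypothesis Rp : cexp_version P (fun w => (Rv w)%:R) XY p.
Hypothesis mF : measurable_fun setT F.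
Hypothesis iF : P.-integrable setT (fun w => (iw0 w * F (XY w))%:E).

Let G1 z := omega T th z.1 z.2 / pr1 * F z.
Let G0 z := - (F z / pr0).

Let mG1 : measurable_fun setT G1.
Proof.
apply: measurable_funM => //; apply: measurable_funM; last exact: measurable_cst.
exact: measurable_omega.
Qed.

Let mG0 : measurable_fun setT G0.
Proof. by apply: measurable_funN; apply: measurable_funM => //; exact: measurable_cst. Qed.

Let Rp_cprob : cprob_version P XY (setT `&` [set w | Rv w]) setT p.
Proof.
case: Rp => _ RpE; apply: cprob_version_indicator => // B mB.
by rewrite setIT; exact: RpE.
Qed.

Let iw0_G1 w : setT w -> Rv w -> iw0 w * F (XY w) = G1 (XY w).
Proof. by move=> _ ->; rewrite /G1 /=; ring. Qed.

Let iw0_G0 w : setT w -> ~~ Rv w -> iw0 w * F (XY w) = G0 (XY w).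
Proof. by move=> _ /negbTE ->; rewrite /G0 /=; ring. Qed.

Lemma integrable_iw0_split :
  P.-integrable setT (fun w => (p (XY w) * G1 (XY w) + (1 - p (XY w)) * G0 (XY w))%:E).
Proof. exact: (integrable_cprob_split mXY _ mRv mp p01 Rp_cprob mG1 mG0 iF iw0_G1 iw0_G0). Qed.

Lemma integral_iw0_split :
  (\int[P]_w (iw0 w * F (XY w))%:E =
   \int[P]_w (p (XY w) * G1 (XY w) + (1 - p (XY w)) * G0 (XY w))%:E)%E.
Proof. exact: (integral_cprob_split mXY _ mRv mp p01 Rp_cprob mG1 mG0 iF iw0_G1 iw0_G0). Qed.

End iw0_split.

Lemma eta_r_ge0_le1 x y : 0 <= eta_r T pr1 pr0 th x y <= 1.
Proof.
have den_gt0 : 0 < pr1 + omega T th x y * pr0.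
  by rewrite addr_gt0 // mulr_gt0 // omega_gt0.
apply/andP; split; first by rewrite divr_ge0 // ltW.
by rewrite ler_pdivrMr // mul1r lerDl mulr_ge0 // ltW // omega_gt0.
Qed.

Lemma integral_iw0_eq0 (F : d.-tuple R * bool -> R) : measurable_fun setT F ->
  P.-integrable setT (fun w => (iw0 w * F (XY w))%:E) ->
  cexp_version P (fun w => (Rv w)%:R) XY (fun z => eta_r T pr1 pr0 th z.1 z.2) ->
  (\int[P]_w (iw0 w * F (XY w))%:E = 0)%E.
Proof.
move=> mF iF Reta; have [meta _] := Reta.
rewrite (integral_iw0_split meta _ Reta mF iF); last by move=> z; exact: eta_r_ge0_le1.
apply: integral0_eq => w _ /=; congr EFin.
have den_gt0 : 0 < pr1 + omega T th (X w) (Y w) * pr0.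
  by rewrite addr_gt0 // mulr_gt0 // omega_gt0.
by rewrite /eta_r; field; rewrite !gt_eqF.
Qed.

Section doubly_robust.
Variables (pR tau : d.-tuple R -> bool -> R) (e : d.-tuple R -> R).
Hypothesis RpR : cexp_version P (fun w => (Rv w)%:R) XY (fun z => pR z.1 z.2).
Hypothesis pR01 : forall x y, 0 < pR x y < 1.
Hypotheses (me : measurable_fun setT e) (e01 : forall x, 0 < e x < 1).
Hypothesis mtau : measurable_fun setT (fun z : d.-tuple R * bool => tau z.1 z.2).
Hypothesis odds : forall x, gamma_true pR x = gamma1 T th x.
Hypothesis Ym0 : forall A, measurable A ->
  (\int[P]_(w in X @^-1` A `&` [set w | ~~ Rv w]) (Y w)%:R%:E =
   \int[P]_(w in X @^-1` A `&` [set w | ~~ Rv w]) (m0 T th e (X w))%:E)%E.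

Local Notation m0e := (m0 T th e).
Let Fres z := tau z.1 z.2 - m0tau T tau th e z.1.
Let D x := (omega T th x false * pR x false / (1 - pR x false) / pr1 - pr0^-1) *
           (tau x true - tau x false).
Let L (z : d.-tuple R * bool) := D z.1 * ((z.2 : bool)%:R - m0e z.1).

Let mpR : measurable_fun setT (fun z : d.-tuple R * bool => pR z.1 z.2).
Proof. by case: RpR. Qed.

Let pR_ge0_le1 z : 0 <= pR z.1 z.2 <= 1.
Proof. by case/andP: (pR01 z.1 z.2) => /ltW -> /ltW ->. Qed.

Let mm0e : measurable_fun setT m0e. Proof. exact: measurable_m0. Qed.

Let mFres : measurable_fun setT Fres.
Proof. exact: measurable_residual. Qed.

Let mD : measurable_fun setT D.
Proof.
have mpRb b : measurable_fun setT (fun x => pR x b).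
  exact: (measurable_fun_pair1 b mpR).
have momega b : measurable_fun setT (fun x => omega T th x b).
  exact: (measurable_fun_pair1 b (measurable_omega mT th)).
have mtaub b : measurable_fun setT (fun x => tau x b).
  exact: (measurable_fun_pair1 b mtau).
apply: measurable_funM; last exact: measurable_funB.
apply: measurable_funB => //; apply: measurable_funM => //.
apply: measurable_funM; first exact: measurable_funM.
by apply: measurable_funV; exact: measurable_funB.
Qed.

Let mL : measurable_fun setT L.
Proof.
by apply: measurable_fun_bool_pair; apply: measurable_funM => //;
  apply: measurable_funB.
Qed.

(* The odds-ratio assumption makes [omega x y * pR x y / (1 - pR x y)]
   independent of [y], hence the factor [1 - pR]. *)
Let iw0_mixE z : pR z.1 z.2 * (omega T th z.1 z.2 / pr1 * Fres z) +
    (1 - pR z.1 z.2) * - (Fres z / pr0) = L z * (1 - pR z.1 z.2).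
Proof.
case: z => x y; rewrite /Fres /L /D /= m0tau_residual.
rewrite -(@odds_omega _ _ _ T pR th x y (pR01 x) (odds x)).
have /andP[_ pR_lt1] := pR01 x y.
by field; rewrite !gt_eqF ?subr_gt0.
Qed.

Lemma integral_iw0_residual_eq0 :
  P.-integrable setT (fun w => (iw0 w * Fres (XY w))%:E) ->
  (\int[P]_w (iw0 w * Fres (XY w))%:E = 0)%E.
Proof.
move=> iF.
have mS0 : measurable (setT `&` [set w | ~~ Rv w]).
  exact/measurableI/measurable_setNb.
have S0pR : cprob_version P XY (setT `&` [set w | ~~ Rv w]) setT
    (fun z => 1 - pR z.1 z.2).
  apply: cprob_versionC => //; case: RpR => _ RpRE.
  by apply: cprob_version_indicator => // B mB; rewrite setIT; exact: RpRE.
have q_ge0 z : 0 <= 1 - pR z.1 z.2 by rewrite subr_ge0; case/andP: (pR_ge0_le1 z).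
have mq : measurable_fun setT (fun z : d.-tuple R * bool => 1 - pR z.1 z.2).
  exact: measurable_funB.
have iL : P.-integrable (setT `&` [set w | ~~ Rv w]) (fun w => (L (XY w))%:E).
  apply/(integrable_cprob mXY mS0 measurableT q_ge0 mq S0pR mL).
  apply: eq_integrable (integrable_iw0_split mpR pR_ge0_le1 RpR mFres iF) => // w _.
  by rewrite iw0_mixE.
rewrite (integral_iw0_split mpR pR_ge0_le1 RpR mFres iF).
under eq_integral do rewrite iw0_mixE.
rewrite -(integral_cprob mXY mS0 measurableT q_ge0 mq S0pR mL).
have Ym0_cprob : cprob_version P X
    ((setT `&` [set w | ~~ Rv w]) `&` [set w | Y w]) (setT `&` [set w | ~~ Rv w]) m0e.
  by apply: cprob_version_indicator => // A mA; rewrite setTI; exact: Ym0.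
have m0e_ge0_le1 x : 0 <= m0e x <= 1 by exact: m0_ge0_le1.
rewrite (integral_cprob_split mX mS0 mY mm0e m0e_ge0_le1 Ym0_cprob
  (G1 := fun x => D x * (1 - m0e x)) (G0 := fun x => - (D x * m0e x))) //.
- by apply: integral0_eq => w _; congr EFin; ring.
- by apply: measurable_funM => //; exact: measurable_funB.
- by apply: measurable_funN; exact: measurable_funM.
- by move=> w _ ->.
- by move=> w _ /negbTE ->; rewrite /L /= sub0r mulrN.
Qed.

End doubly_robust.

End bias.

Theorem theorem1 (R : realType) (dO : measure_display) (Omega : measurableType dO)
  (P : probability Omega R) (d k : nat)
  (X : Omega -> d.-tuple R) (Y Rv : Omega -> bool)
  (pR pY : d.-tuple R -> bool -> R)
  (T : d.-tuple R -> k.-tuple R)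
  (Xi : Type) (eta1 : Xi -> d.-tuple R -> R)
  (tau : d.-tuple R -> bool -> R)
  (thS : param R k) (xiS : Xi) :
  let pr1 := fine (P [set w | Rv w]) in
  let pr0 := fine (P [set w | ~~ Rv w]) in
  let XY := fun w => (X w, Y w) in
  let XR := fun w => (X w, Rv w) in
  let wIW0 := fun w => (Rv w)%:R / pr1 * omega T thS (X w) (Y w)
                       - (1 - (Rv w)%:R) / pr0 in
  let wIW := fun w => (Rv w)%:R / eta_r T pr1 pr0 thS (X w) (Y w) - 1 in
  let res := fun w => tau (X w) (Y w) - m0tau T tau thS (eta1 xiS) (X w) in
  (* random triple (X,Y,R) *)
  measurable_fun setT X -> measurable_fun setT Y -> measurable_fun setT Rv ->
  (* 0 < P(R=1) < 1 *)
  0 < pr1 < 1 ->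
  (* versions of P(R=1|X=x,Y=y) and P(Y=1|X=x,R=r), all conditional
     probabilities in (0,1) *)
  cexp_version P (fun w => (Rv w)%:R) XY (fun z => pR z.1 z.2) ->
  cexp_version P (fun w => (Y w)%:R) XR (fun z => pY z.1 z.2) ->
  (forall x y, 0 < pR x y < 1) -> (forall x r, 0 < pY x r < 1) ->
  (* T measurable, eta_1(.;xi) measurable into (0,1) *)
  measurable_fun setT T ->
  (forall xi, measurable_fun setT (eta1 xi)) ->
  (forall xi x, 0 < eta1 xi x < 1) ->
  measurable_fun setT (fun z : d.-tuple R * bool => tau z.1 z.2) ->
  (* all expectations finite *)
  P.-integrable setT (fun w => (tau (X w) (Y w))%:E) ->
  P.-integrable setT (fun w => (m0tau T tau thS (eta1 xiS) (X w))%:E) ->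
  P.-integrable setT (fun w => (wIW0 w * tau (X w) (Y w))%:E) ->
  P.-integrable setT (fun w => (wIW w * tau (X w) (Y w))%:E) ->
  P.-integrable setT (fun w => (wIW0 w * res w)%:E) ->
  P.-integrable setT (fun w => (wIW w * res w)%:E) ->
  (* (i) E[R | X,Y] = eta_r(X,Y;thetaS) *)
  (cexp_version P (fun w => (Rv w)%:R) XY
     (fun z => eta_r T pr1 pr0 thS z.1 z.2) ->
   (\int[P]_w (wIW0 w * tau (X w) (Y w))%:E = 0)%E /\
   (\int[P]_w (wIW w * tau (X w) (Y w))%:E = 0)%E /\
   (\int[P]_w (wIW0 w * res w)%:E = 0)%E /\
   (\int[P]_w (wIW w * res w)%:E = 0)%E) /\
  (* (ii) gamma(1|x) = gamma(1|x;thetaS) for all x and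
          E[Y | X, R=0] = m_0(X;thetaS,xiS) *)
  ((forall x, gamma_true pR x = gamma1 T thS x) ->
   (forall A : set (d.-tuple R), measurable A ->
      (\int[P]_(w in X @^-1` A `&` [set w | ~~ Rv w]) (Y w)%:R%:E =
       \int[P]_(w in X @^-1` A `&` [set w | ~~ Rv w])
          (m0 T thS (eta1 xiS) (X w))%:E)%E) ->
   (\int[P]_w (wIW0 w * res w)%:E = 0)%E /\
   (\int[P]_w (wIW w * res w)%:E = 0)%E).
Proof.
move=> pr1 pr0 XY XR wIW0 wIW res mX mY mRv pr1_01 RpR _ pR01 _ mT meta eta01 mtau
  _ _ iw0_tau _ iw0_res _.
have mres := measurable_residual mT thS mtau (meta xiS).
have iw_tau := integral_iw mRv pr1_01 (F := fun z => tau z.1 z.2) iw0_tau.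
have iw_res := integral_iw mRv pr1_01 (F := fun z => tau z.1 z.2 -
  m0tau T tau thS (eta1 xiS) z.1) iw0_res.
split.
- move=> Reta.
  have iw0_tau_eq0 := integral_iw0_eq0 mX mY mRv mT pr1_01 mtau iw0_tau Reta.
  have iw0_res_eq0 := integral_iw0_eq0 mX mY mRv mT pr1_01 mres iw0_res Reta.
  rewrite iw0_tau_eq0 mule0 in iw_tau; rewrite iw0_res_eq0 mule0 in iw_res.
  by split; [exact: iw0_tau_eq0 | split; [exact: iw_tau | split]].
- move=> odds Ym0.
  have iw0_res_eq0 := integral_iw0_residual_eq0 mX mY mRv mT pr1_01 RpR pR01 (meta xiS)
    (eta01 xiS) mtau odds Ym0 iw0_res.
  rewrite iw0_res_eq0 mule0 in iw_res.
  by split; [exact: iw0_res_eq0 | exact: iw_res].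
Qed.
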